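(* Let $\gamma>1$, $\alpha,\beta\in\mathbb{R}$, $u_->0$, $c_->0$, and let $s_c=c_-^{\frac{2}{\gamma+1}}u_-^{\frac{\gamma-1}{\gamma+1}}$. Define $$L_m=\frac1\beta\Big(\frac{1}{1-\alpha}(s_c^{1-\alpha}-u_-^{1-\alpha})+\frac{1}{\gamma+\alpha}c_-^2(u_-^{\gamma-1}s_c^{-\gamma-\alpha}-u_-^{-1-\alpha})\Big)\quad\text{if }\alpha\neq1,\ \alpha\ne-\gamma,$$ $$L_m=\frac1\beta\Big(\frac{1}{\gamma+1}c_-^2(u_-^{\gamma-1}s_c^{-\gamma-1}-u_-^{-2})+\ln\frac{s_c}{u_-}\Big)\quad\text{if }\alpha=1,$$ $$L_m=\frac1\beta\Big(\frac{1}{\gamma+1}(s_c^{\gamma+1}-u_-^{\gamma+1})-c_-^2u_-^{\gamma-1}\ln\frac{s_c}{u_-}\Big)\quad\text{if }\alpha=-\gamma,$$ a positive constant depending only on $\alpha,\beta,\gamma,c_-,u_-$. If the duct length satisfies $L<L_m$, then the Cauchy problem $$\tilde c'\tilde u+\tfrac{\gamma-1}{2}\tilde c\tilde u'=0,\qquad \tilde u\tilde u'+\tfrac{2}{\gamma-1}\tilde c\tilde c'=\beta\tilde u^{1+\alpha},\qquad (\tilde c,\tilde u)(0)=(c_-,u_-)$$ admits a unique smooth positive solution $(\tilde c(x),\tilde u(x))^\top$ on $[0,L]$, which for $x\in(0,L]$ satisfies: 1) $0<\tilde u(x)<u_-<c_-<\tilde c(x)$ if $\beta>0$ and $c_->u_-$;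 2) $0<\tilde c(x)<c_-<u_-<\tilde u(x)$ if $\beta>0$ and $c_-<u_-$; 3) $0<u_-<\tilde u(x)<\tilde c(x)<c_-$ if $\beta<0$ and $c_->u_-$; 4) $0<c_-<\tilde c(x)<\tilde u(x)<u_-$ if $\beta<0$ and $c_-<u_-$.
   Context: Here $\tilde c$ represents the sound speed and $\tilde u$ the fluid velocity of a steady flow of the isentropic Euler equations with friction term $\beta\rho|u|^\alpha u$ and pressure $p=\rho^\gamma$, with $\tilde c=\sqrt\gamma\tilde\rho^{\frac{\gamma-1}{2}}$. *)

From Stdlib Require Import Reals.
From Coquelicot Require Import Coquelicot.
Open Scope R_scope.

Definition s_c (gamma cm um : R) : R :=
  Rpower cm (2 / (gamma + 1)) * Rpower um ((gamma - 1) / (gamma + 1)).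

Definition L_m (alpha beta gamma cm um : R) : R :=
  let s := s_c gamma cm um in
  if Req_EM_T alpha 1 then
    / beta * (/ (gamma + 1) * cm ^ 2 *
               (Rpower um (gamma - 1) * Rpower s (- gamma - 1) - Rpower um (-2))
              + ln (s / um))
  else if Req_EM_T alpha (- gamma) then
    / beta * (/ (gamma + 1) * (Rpower s (gamma + 1) - Rpower um (gamma + 1))
              - cm ^ 2 * Rpower um (gamma - 1) * ln (s / um))
  else
    / beta * (/ (1 - alpha) * (Rpower s (1 - alpha) - Rpower um (1 - alpha))
              + / (gamma + alpha) * cm ^ 2 *
                (Rpower um (gamma - 1) * Rpower s (- gamma - alpha)
                 - Rpower um (- 1 - alpha))).

Definition ode_at (alpha beta gamma : R) (c u : R -> R) (x : R) : Prop :=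
  Derive c x * u x + (gamma - 1) / 2 * c x * Derive u x = 0 /\
  u x * Derive u x + 2 / (gamma - 1) * c x * Derive c x
    = beta * Rpower (u x) (1 + alpha).

(* Smooth (C^infinity) positive solution on [0,L]: derivatives of every order
   exist at every point of the closed interval [0,L] (two-sided, i.e. f is
   smooth on a neighbourhood of [0,L]); the ODE holds on [0,L]. *)
Definition smooth_sol (alpha beta gamma cm um L : R) (c u : R -> R) : Prop :=
  c 0 = cm /\ u 0 = um /\
  (forall x, 0 <= x <= L ->
     0 < c x /\ 0 < u x /\
     (forall n : nat, ex_derive_n c n x /\ ex_derive_n u n x) /\
     ode_at alpha beta gamma c u x).

Definition weak_sol (alpha beta gamma cm um L : R) (c u : R -> R) : Prop :=
  c 0 = cm /\ u 0 = um /\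
  (forall x, 0 <= x <= L -> 0 < c x /\ 0 < u x) /\
  filterlim c (at_right 0) (locally cm) /\
  filterlim u (at_right 0) (locally um) /\
  filterlim c (at_left L) (locally (c L)) /\
  filterlim u (at_left L) (locally (u L)) /\
  (forall x, 0 < x < L ->
     ex_derive c x /\ ex_derive u x /\ ode_at alpha beta gamma c u x).

(* The first equation says that c^2 u^(gamma-1) is constant, so c is the explicit function
   [sound_speed] of u.  Substituting it into the second equation gives
   dx/du = beta^-1 (u^-alpha - K u^(-gamma-1-alpha)), which vanishes only at the sonic value
   s_c.  Hence x = x_of_u (u x), where x_of_u is strictly monotone on the side of s_c containing
   u_- and reaches its extreme value L_m = x_of_u s_c there.  As beta * L_m < 0 whenever
   beta <> 0, the hypothesis 0 < L < L_m forces beta < 0, so the clauses for beta > 0 hold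
   vacuously.  The inverse of x_of_u on that side is then a solution on [0, L]; it is smooth
   because u' = 1 / x_of_u'(u) is built from real powers of u, and it is unique because any
   solution obeys the same two integrals and, being continuous, cannot cross s_c, where x_of_u
   would have to reach L_m > L. *)

From Stdlib Require Import Reals Lra ClassicalEpsilon.
From Coquelicot Require Import Coquelicot.
Open Scope R_scope.

(** * Real powers and one-variable calculus *)

Lemma Rpower_pos (x y : R) : 0 < Rpower x y.
Proof. apply exp_pos. Qed.

Lemma Rpower_lt_Rpower_iff (a b e : R) : 0 < a -> 0 < b -> 0 < e ->
  (a < b <-> Rpower a e < Rpower b e).
Proof.
  intros Ha Hb He; split; intros Hlt; [now apply Rlt_Rpower_l|].
  destruct (Rtotal_order a b) as [?|[->|Hba]]; [easy|lra|].
  pose proof (Rlt_Rpower_l b a e He (conj Hb Hba)); lra.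
Qed.

Lemma Rpower_plus_1_sub_1 (v a : R) : 0 < v -> Rpower v (a + 1) = v * v * Rpower v (a - 1).
Proof.
  intros Hv; replace (a + 1) with (INR 2 + (a - 1)) by (simpl; ring).
  rewrite Rpower_plus, Rpower_pow by easy; simpl; ring.
Qed.

Lemma is_derive_Rpower (a x : R) : 0 < x ->
  is_derive (fun y => Rpower y a) x (a * Rpower x (a - 1)).
Proof. intros Hx; now apply is_derive_Reals, derivable_pt_lim_power. Qed.

Lemma continuity_pt_Rpower (a x : R) : 0 < x -> continuity_pt (fun y => Rpower y a) x.
Proof.
  intros Hx; apply derivable_continuous_pt.
  exists (a * Rpower x (a - 1)); now apply is_derive_Reals, is_derive_Rpower.
Qed.

Lemma continuity_pt_ex_derive (f : R -> R) (x : R) : ex_derive f x -> continuity_pt f x.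
Proof. intros [l Hl]; apply derivable_continuous_pt; exists l; now apply is_derive_Reals. Qed.

Lemma continuity_pt_Rpower_comp (f : R -> R) (a x : R) : 0 < f x -> continuity_pt f x ->
  continuity_pt (fun t => Rpower (f t) a) x.
Proof.
  intros Hfx Hf; apply (continuity_pt_comp f (fun y => Rpower y a)); [easy|].
  now apply continuity_pt_Rpower.
Qed.

Lemma Derive_Rpower (a x : R) : 0 < x -> Derive (fun y => Rpower y a) x = a * Rpower x (a - 1).
Proof. intros Hx; now apply is_derive_unique, is_derive_Rpower. Qed.

Lemma ex_derive_Rpower (a x : R) : 0 < x -> ex_derive (fun y => Rpower y a) x.
Proof. intros Hx; eexists; now apply is_derive_Rpower. Qed.

Lemma is_derive_eq (f : R -> R) (x l l' : R) : is_derive f x l -> l = l' -> is_derive f x l'.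
Proof. now intros Hd <-. Qed.

Lemma strict_incr_of_is_derive_pos (f f' : R -> R) (a b : R) : a < b ->
  (forall x, a <= x <= b -> is_derive f x (f' x)) -> (forall x, a < x < b -> 0 < f' x) ->
  f a < f b.
Proof.
  intros Hab Hd Hpos.
  destruct (MVT_cor2 f f' a b Hab) as [c [Hmvt Hc]].
  - intros c Hc; now apply is_derive_Reals, Hd.
  - specialize (Hpos c Hc); nra.
Qed.

Lemma strict_decr_of_is_derive_neg (f f' : R -> R) (a b : R) : a < b ->
  (forall x, a <= x <= b -> is_derive f x (f' x)) -> (forall x, a < x < b -> f' x < 0) ->
  f b < f a.
Proof.
  intros Hab Hd Hneg.
  destruct (MVT_cor2 f f' a b Hab) as [c [Hmvt Hc]].
  - intros c Hc; now apply is_derive_Reals, Hd.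
  - specialize (Hneg c Hc); nra.
Qed.

Lemma constant_of_is_derive_0 (f : R -> R) (a b : R) :
  (forall x, a < x < b -> is_derive f x 0) -> (forall x, a <= x <= b -> continuity_pt f x) ->
  forall x, a <= x <= b -> f x = f a.
Proof.
  intros Hd Hc x Hx.
  destruct (MVT_gen f a x (fun _ => 0)) as [c [_ Hmvt]].
  - intros y Hy; apply Hd; revert Hy; unfold Rmin, Rmax; destruct Rle_dec; lra.
  - intros y Hy; apply Hc; revert Hy; unfold Rmin, Rmax; destruct Rle_dec; lra.
  - lra.
Qed.

Lemma eq_on_closed_interval (f g : R -> R) (a b : R) :
  g a = f a -> g b = f b -> (forall x, a < x < b -> g x = f x) ->
  forall x, a <= x <= b -> g x = f x.
Proof.
  intros Ha Hb Hab x Hx.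
  destruct (Req_dec x a) as [->|]; [easy|]; destruct (Req_dec x b) as [->|]; [easy|].
  apply Hab; lra.
Qed.

Lemma IVT_strict (f : R -> R) (a b y : R) : a < b ->
  (forall x, a <= x <= b -> continuity_pt f x) -> f a < y < f b ->
  exists c, a < c < b /\ f c = y.
Proof.
  intros Hab Hc Hy.
  destruct (Ranalysis5.IVT_interv (fun x => f x - y) a b) as [c [Hcab Hfc]]; try lra.
  - intros x Hx; apply continuity_pt_minus; [now apply Hc|].
    apply continuity_pt_const; now intros ? ?.
  - exists c; split; [|lra].
    split; apply Rnot_le_lt; intros Hle.
    + assert (c = a) as -> by lra; lra.
    + assert (c = b) as -> by lra; lra.
Qed.

Lemma pos_of_continuous_nonzero (f : R -> R) (a b : R) :
  (forall x, a <= x <= b -> continuity_pt f x) -> (forall x, a <= x <= b -> f x <> 0) ->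
  0 < f a -> forall x, a <= x <= b -> 0 < f x.
Proof.
  intros Hc Hnz Ha x Hx.
  destruct (Rlt_le_dec 0 (f x)) as [|Hle]; [easy|].
  destruct (Rle_lt_or_eq_dec _ _ Hle) as [Hneg|Hzero]; [|now destruct (Hnz x Hx)].
  destruct (IVT_strict (fun y => - f y) a x 0) as [z [Hz Hfz]].
  - destruct (Req_dec a x) as [<-|]; lra.
  - intros y Hy; apply continuity_pt_opp, Hc; lra.
  - lra.
  - destruct (Hnz z); lra.
Qed.

Lemma exists_inverse_of_strict_incr (f : R -> R) (lb ub : R) : lb < ub ->
  (forall x, lb <= x <= ub -> continuity_pt f x) ->
  (forall x y, lb <= x -> x < y -> y <= ub -> f x < f y) ->
  exists g : R -> R, (forall y, f lb <= y <= f ub -> lb <= g y <= ub /\ f (g y) = y) /\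
                     (forall x, lb <= x <= ub -> g (f x) = x).
Proof.
  intros Hlu Hc Hincr.
  assert (Hmono : forall x y, lb <= x <= ub -> lb <= y <= ub -> x < y -> f x < f y)
    by (intros; apply Hincr; lra).
  destruct (choice (fun y z => f lb <= y <= f ub -> lb <= z <= ub /\ f z = y)) as [g Hg].
  - intros y.
    destruct (Rle_dec (f lb) y) as [Hlo|]; [|exists lb; lra].
    destruct (Rle_dec y (f ub)) as [Hhi|]; [|exists lb; lra].
    destruct (Rle_lt_or_eq_dec _ _ Hlo) as [Hlo'|<-]; [|exists lb; intros _; split; [lra|easy]].
    destruct (Rle_lt_or_eq_dec _ _ Hhi) as [Hhi' | ->]; [|exists ub; intros _; split; [lra|easy]].
    destruct (IVT_strict f lb ub y Hlu Hc (conj Hlo' Hhi')) as [z [Hz Hfz]].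
    exists z; intros _; split; [lra|easy].
  - exists g; split; [easy|intros x Hx].
    assert (Hfx : f lb <= f x <= f ub).
    { split; [destruct (Req_dec lb x) as [->|]|destruct (Req_dec x ub) as [->|]];
        try lra; apply Rlt_le, Hmono; lra. }
    destruct (Hg (f x) Hfx) as [Hgx Hfgx].
    destruct (Rtotal_order (g (f x)) x) as [Hlt|[|Hlt]]; [exfalso|easy|exfalso].
    + pose proof (Hmono (g (f x)) x); lra.
    + pose proof (Hmono x (g (f x))); lra.
Qed.

Lemma is_derive_inverse_of_incr (f f' : R -> R) (lb ub : R) : lb < ub ->
  (forall x, lb <= x <= ub -> is_derive f x (f' x)) -> (forall x, lb <= x <= ub -> 0 < f' x) ->
  exists g : R -> R, forall y, f lb < y < f ub ->
    lb < g y < ub /\ f (g y) = y /\ is_derive g y (/ f' (g y)).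
Proof.
  intros Hlu Hd Hpos.
  assert (Hincr : forall x y, lb <= x -> x < y -> y <= ub -> f x < f y).
  { intros x y Hx Hxy Hy; apply (strict_incr_of_is_derive_pos f f'); auto.
    - intros; apply Hd; lra.
    - intros; apply Hpos; lra. }
  assert (Hc : forall x, lb <= x <= ub -> continuity_pt f x).
  { intros x Hx; apply derivable_continuous_pt; exists (f' x); now apply is_derive_Reals, Hd. }
  assert (Hflu : f lb < f ub) by (apply Hincr; lra).
  destruct (exists_inverse_of_strict_incr f lb ub Hlu Hc Hincr) as [g [Hg Hgf]].
  exists g; intros y Hy.
  destruct (Hg y) as [Hgy Hfgy]; [lra|].
  assert (Hgy' : lb < g y < ub).
  { split; apply Rnot_le_lt; intros Hle.
    - assert (g y = lb) as Heq by lra; rewrite Heq in Hfgy; lra.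
    - assert (g y = ub) as Heq by lra; rewrite Heq in Hfgy; lra. }
  split; [exact Hgy'|split; [exact Hfgy|]].
  rewrite <- (Hgf lb), <- (Hgf ub) in Hd by lra.
  assert (Prf : forall x, g (f lb) <= x <= g (f ub) -> derivable_pt f x)
    by (intros x Hx; exists (f' x); now apply is_derive_Reals, Hd).
  assert (Hgc : continuity_pt g y).
  { apply (Ranalysis5.continuity_pt_recip_interv f g lb ub); auto.
    - intros x ? ?; unfold comp, id; apply Hg; lra.
    - intros x ? ?; apply Hg; lra. }
  assert (Hgy'' : g (f lb) <= g y <= g (f ub)) by (rewrite !Hgf; lra).
  pose proof (Ranalysis5.derivable_pt_lim_recip_interv f g (f lb) (f ub) y Prf Hgc Hflu Hy Hgy'')
    as Hderiv.
  rewrite (derive_pt_eq_0 _ _ _ _ (proj1 (is_derive_Reals _ _ _) (Hd (g y) Hgy''))) in Hderiv.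
  apply is_derive_Reals; replace (/ f' (g y)) with (1 / f' (g y)) by (unfold Rdiv; ring).
  apply Hderiv.
  - intros x Hx; unfold comp, id; apply Hg; lra.
  - pose proof (Hpos (g y)); lra.
Qed.

Lemma is_derive_inverse_of_decr (f f' : R -> R) (lb ub : R) : lb < ub ->
  (forall x, lb <= x <= ub -> is_derive f x (f' x)) -> (forall x, lb <= x <= ub -> f' x < 0) ->
  exists g : R -> R, forall y, f ub < y < f lb ->
    lb < g y < ub /\ f (g y) = y /\ is_derive g y (/ f' (g y)).
Proof.
  intros Hlu Hd Hneg.
  destruct (is_derive_inverse_of_incr (fun x => f (- x)) (fun x => - f' (- x)) (- ub) (- lb))
    as [g Hg].
  - lra.
  - intros x Hx; auto_derive; [eexists; apply (Hd (- x)); lra|].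
    replace (Derive (fun y => f y) (- x)) with (f' (- x))
      by (symmetry; apply is_derive_unique, Hd; lra); ring.
  - intros x Hx; pose proof (Hneg (- x)); lra.
  - exists (fun y => - g y); intros y Hy; rewrite !Ropp_involutive in Hg.
    destruct (Hg y Hy) as [Hgy [Hfgy Hdg]]; split; [lra|split; [easy|]].
    auto_derive; [eexists; exact Hdg|].
    replace (Derive (fun z => g z) y) with (/ - f' (- g y))
      by (symmetry; now apply is_derive_unique).
    pose proof (Hneg (- g y)); field; lra.
Qed.

(** * Smoothness of autonomous flows with power-law speed *)

(* Closed under differentiation on [I], so a solution of [u' = F u] with [F] in the class
   and values in [I] is C^infinity. *)
Inductive rpower_expr (I : R -> Prop) : (R -> R) -> Prop :=
  | rpower_expr_const a : rpower_expr I (fun _ => a)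
  | rpower_expr_id : rpower_expr I (fun y => y)
  | rpower_expr_pow a : rpower_expr I (fun y => Rpower y a)
  | rpower_expr_opp f : rpower_expr I f -> rpower_expr I (fun y => - f y)
  | rpower_expr_plus f g : rpower_expr I f -> rpower_expr I g -> rpower_expr I (fun y => f y + g y)
  | rpower_expr_mult f g : rpower_expr I f -> rpower_expr I g -> rpower_expr I (fun y => f y * g y)
  | rpower_expr_inv f : rpower_expr I f -> (forall y, I y -> f y <> 0) ->
      rpower_expr I (fun y => / f y).

Section RpowerExpr.

Variable I : R -> Prop.
Hypothesis I_pos : forall y, I y -> 0 < y.

Lemma rpower_expr_is_derive (f : R -> R) : rpower_expr I f ->
  exists f', rpower_expr I f' /\ forall y, I y -> is_derive f y (f' y).
Proof.
  induction 1 as [a| |a|f _ [f' [Hf' Df]]|f g _ [f' [Hf' Df]] _ [g' [Hg' Dg]]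
                 |f g Hf [f' [Hf' Df]] Hg [g' [Hg' Dg]]|f Hf [f' [Hf' Df]] Hnz].
  - exists (fun _ => 0); split; [apply rpower_expr_const|intros; now auto_derive].
  - exists (fun _ => 1); split; [apply rpower_expr_const|intros; now auto_derive].
  - exists (fun y => a * Rpower y (a - 1)); split; [repeat constructor|].
    intros y Hy; now apply is_derive_Rpower, I_pos.
  - exists (fun y => - f' y); split; [now constructor|].
    intros y Hy; now apply (is_derive_opp f), Df.
  - exists (fun y => f' y + g' y); split; [now constructor|].
    intros y Hy; now apply (is_derive_plus f g); [apply Df|apply Dg].
  - exists (fun y => f' y * g y + f y * g' y); split; [now repeat constructor|].
    intros y Hy; apply (is_derive_mult f g); [now apply Df|now apply Dg|apply Rmult_comm].
  - exists (fun y => - (f' y * (/ f y * / f y))); split; [now repeat constructor|].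
    intros y Hy; eapply is_derive_eq; [apply is_derive_inv; [now apply Df|now apply Hnz]|].
    specialize (Hnz y Hy); field; easy.
Qed.

Variables (F u : R -> R) (a b : R).
Hypothesis F_expr : rpower_expr I F.
Hypothesis u_autonomous : forall x, a < x < b -> I (u x) /\ is_derive u x (F (u x)).

Lemma Derive_n_comp_rpower_expr (n : nat) (f : R -> R) : rpower_expr I f ->
  exists h, rpower_expr I h /\ forall x, a < x < b -> Derive_n (fun t => f (u t)) n x = h (u x).
Proof.
  revert f; induction n as [|n IHn]; intros f Hf; [now exists f|].
  destruct (IHn f Hf) as [h [Hh Eh]].
  destruct (rpower_expr_is_derive h Hh) as [h' [Hh' Dh]].
  exists (fun y => h' y * F y); split; [now constructor|].
  intros x Hx; simpl.
  rewrite (Derive_ext_loc _ (fun t => h (u t))).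
  - apply is_derive_unique; eapply is_derive_eq.
    + apply (is_derive_comp h u); [apply Dh, u_autonomous, Hx|apply u_autonomous, Hx].
    + apply Rmult_comm.
  - apply (locally_interval _ x a b); simpl; try lra.
    intros y Hay Hyb; now apply Eh.
Qed.

Lemma ex_derive_n_comp_rpower_expr (n : nat) (f : R -> R) : rpower_expr I f ->
  forall x, a < x < b -> ex_derive_n (fun t => f (u t)) n x.
Proof.
  intros Hf x Hx; destruct n as [|n]; [easy|simpl].
  destruct (Derive_n_comp_rpower_expr n f Hf) as [h [Hh Eh]].
  destruct (rpower_expr_is_derive h Hh) as [h' [Hh' Dh]].
  apply (ex_derive_ext_loc (fun t => h (u t))).
  - apply (locally_interval _ x a b); simpl; try lra.
    intros y Hay Hyb; symmetry; now apply Eh.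
  - eexists; apply (is_derive_comp h u); [apply Dh, u_autonomous, Hx|apply u_autonomous, Hx].
Qed.

End RpowerExpr.

(** * The integrals of the stationary equations *)

Definition invariant_K (gamma cm um : R) : R := cm ^ 2 * Rpower um (gamma - 1).

(* [v ^ (1 + alpha) * sonic_defect v = (v ^ 2 - sound_speed v ^ 2) / v], so it vanishes
   exactly at the sonic point. *)
Definition sonic_defect (alpha gamma cm um v : R) : R :=
  Rpower v (- alpha) - invariant_K gamma cm um * Rpower v (- gamma - 1 - alpha).

Definition dx_du (alpha beta gamma cm um v : R) : R := / beta * sonic_defect alpha gamma cm um v.

(* The primitive of [dx_du] vanishing at [u_-]; [L_m] is its value at [s_c]. *)
Definition x_of_u (alpha beta gamma cm um v : R) : R :=
  if Req_EM_T alpha 1 then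
    / beta * (/ (gamma + 1) * cm ^ 2 *
               (Rpower um (gamma - 1) * Rpower v (- gamma - 1) - Rpower um (-2))
              + ln (v / um))
  else if Req_EM_T alpha (- gamma) then
    / beta * (/ (gamma + 1) * (Rpower v (gamma + 1) - Rpower um (gamma + 1))
              - cm ^ 2 * Rpower um (gamma - 1) * ln (v / um))
  else
    / beta * (/ (1 - alpha) * (Rpower v (1 - alpha) - Rpower um (1 - alpha))
              + / (gamma + alpha) * cm ^ 2 *
                (Rpower um (gamma - 1) * Rpower v (- gamma - alpha)
                 - Rpower um (- 1 - alpha))).

Definition sound_speed (gamma cm um v : R) : R :=
  cm * Rpower um ((gamma - 1) / 2) * Rpower v ((1 - gamma) / 2).

Definition same_regime (s um v : R) : Prop := (0 < v < s /\ um < s) \/ (s < v /\ s < um).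

Section Model.

Variables alpha beta gamma cm um : R.
Hypothesis gamma_gt1 : 1 < gamma.
Hypothesis cm_pos : 0 < cm.
Hypothesis um_pos : 0 < um.

Local Notation s := (s_c gamma cm um).
Local Notation K := (invariant_K gamma cm um).
Local Notation D := (sonic_defect alpha gamma cm um).
Local Notation X := (x_of_u alpha beta gamma cm um).
Local Notation X' := (dx_du alpha beta gamma cm um).
Local Notation S := (sound_speed gamma cm um).

Lemma L_m_x_of_u : L_m alpha beta gamma cm um = X s.
Proof. reflexivity. Qed.

Lemma s_c_pos : 0 < s.
Proof. apply Rmult_lt_0_compat; apply Rpower_pos. Qed.

Lemma Rpower_s_c : Rpower s (gamma + 1) = K.
Proof.
  unfold s_c, invariant_K.
  rewrite <- Rpower_mult_distr, !Rpower_mult by apply Rpower_pos.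
  replace (2 / (gamma + 1) * (gamma + 1)) with (INR 2) by (simpl; field; lra).
  replace ((gamma - 1) / (gamma + 1) * (gamma + 1)) with (gamma - 1) by (field; lra).
  now rewrite Rpower_pow.
Qed.

Lemma x_of_u_um : X um = 0.
Proof.
  unfold x_of_u; replace (um / um) with 1 by (field; lra); rewrite ln_1.
  destruct (Req_EM_T alpha 1) as [->|]; [|destruct (Req_EM_T alpha (- gamma))]; [| ring |].
  - replace (-2) with (- gamma - 1 + (gamma - 1)) by ring.
    rewrite Rpower_plus; ring.
  - replace (- 1 - alpha) with ((gamma - 1) + (- gamma - alpha)) by ring.
    rewrite Rpower_plus; ring.
Qed.

Lemma is_derive_x_of_u (v : R) : 0 < v -> is_derive X v (X' v).
Proof.
  intros Hv; unfold x_of_u, dx_du, sonic_defect, invariant_K.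
  destruct (Req_EM_T alpha 1) as [->|Ha1]; [|destruct (Req_EM_T alpha (- gamma)) as [->|Hag]].
  - auto_derive; [repeat split; auto using ex_derive_Rpower; apply Rdiv_lt_0_compat; lra|].
    rewrite Derive_Rpower, Rpower_Ropp, Rpower_1 by easy.
    f_equal; field; lra.
  - auto_derive; [repeat split; auto using ex_derive_Rpower; apply Rdiv_lt_0_compat; lra|].
    rewrite Derive_Rpower by easy.
    replace (- - gamma) with (gamma + 1 - 1) by ring.
    replace (- gamma - 1 - - gamma) with (- (1)) by ring.
    rewrite Rpower_Ropp, Rpower_1 by easy.
    f_equal; field; lra.
  - auto_derive; [repeat split; auto using ex_derive_Rpower|].
    rewrite !Derive_Rpower by easy.
    replace (1 - alpha - 1) with (- alpha) by ring.
    replace (- gamma - alpha - 1) with (- gamma - 1 - alpha) by ring.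
    f_equal; field; lra.
Qed.

Lemma x_of_u_continuous (v : R) : 0 < v -> continuity_pt X v.
Proof.
  intros Hv; apply derivable_continuous_pt; exists (X' v).
  now apply is_derive_Reals, is_derive_x_of_u.
Qed.

Lemma sonic_defect_factor (v : R) : 0 < v ->
  D v = Rpower v (- gamma - 1 - alpha) * (Rpower v (gamma + 1) - K).
Proof.
  intros Hv; unfold sonic_defect; rewrite Rmult_minus_distr_l, <- Rpower_plus.
  replace (- gamma - 1 - alpha + (gamma + 1)) with (- alpha) by ring; ring.
Qed.

Lemma sonic_defect_neg (v : R) : 0 < v < s -> D v < 0.
Proof.
  intros [Hv Hvs]; rewrite sonic_defect_factor, <- Rpower_s_c by easy.
  apply (Rpower_lt_Rpower_iff v s (gamma + 1)) in Hvs; [|easy|apply s_c_pos|lra].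
  pose proof (Rpower_pos v (- gamma - 1 - alpha)); nra.
Qed.

Lemma sonic_defect_pos (v : R) : s < v -> 0 < D v.
Proof.
  intros Hsv; pose proof s_c_pos as Hs.
  rewrite sonic_defect_factor, <- Rpower_s_c by lra.
  apply (Rpower_lt_Rpower_iff s v (gamma + 1)) in Hsv; [|easy|lra|lra].
  pose proof (Rpower_pos v (- gamma - 1 - alpha)); nra.
Qed.

Lemma beta_x_of_u_s_c_neg : beta <> 0 -> s <> um -> beta * X s < 0.
Proof.
  intros Hb Hs; pose proof s_c_pos.
  enough (beta * X s < beta * X um) by (rewrite x_of_u_um in *; lra).
  assert (Hd : forall v, 0 < v -> is_derive (fun w => beta * X w) v (D v)).
  { intros v Hv; eapply is_derive_eq; [now apply is_derive_scal, is_derive_x_of_u|].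
    unfold dx_du; field; easy. }
  destruct (Rtotal_order um s) as [Hlt|[|Hlt]]; [|congruence|].
  - apply (strict_decr_of_is_derive_neg (fun w => beta * X w) D); [easy| |].
    + intros v Hv; apply Hd; lra.
    + intros v Hv; apply sonic_defect_neg; lra.
  - apply (strict_incr_of_is_derive_pos (fun w => beta * X w) D); [easy| |].
    + intros v Hv; apply Hd; lra.
    + intros v Hv; apply sonic_defect_pos; lra.
Qed.

Lemma L_m_pos_inv : 0 < L_m alpha beta gamma cm um -> beta < 0 /\ s <> um.
Proof.
  rewrite L_m_x_of_u; intros HL.
  destruct (Req_dec s um) as [Hs|Hs]; [rewrite Hs, x_of_u_um in HL; lra|].
  destruct (Req_dec beta 0) as [->|Hb].
  - (* [/ 0 = 0] in Rocq, so [x_of_u] is identically zero for [beta = 0]. *)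
    revert HL; unfold x_of_u; rewrite Rinv_0.
    destruct (Req_EM_T alpha 1); [|destruct (Req_EM_T alpha (- gamma))]; lra.
  - pose proof (beta_x_of_u_s_c_neg Hb Hs); split; [nra|easy].
Qed.

Lemma same_regime_pos (v : R) : same_regime s um v -> 0 < v.
Proof. pose proof s_c_pos; intros [|]; lra. Qed.

Lemma same_regime_um : s <> um -> same_regime s um um.
Proof. intros Hs; destruct (Rtotal_order um s) as [|[|]]; [left|congruence|right]; lra. Qed.

Lemma sonic_defect_neq0 (v : R) : same_regime s um v -> D v <> 0.
Proof.
  intros [Hv|Hv]; [pose proof (sonic_defect_neg v)|pose proof (sonic_defect_pos v)]; lra.
Qed.

Section NegativeBeta.

Hypothesis beta_neg : beta < 0.

Lemma dx_du_pos (v : R) : 0 < v < s -> 0 < X' v.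
Proof.
  intros Hv; pose proof (sonic_defect_neg v Hv); pose proof (Rinv_lt_0_compat _ beta_neg).
  unfold dx_du; nra.
Qed.

Lemma dx_du_neg (v : R) : s < v -> X' v < 0.
Proof.
  intros Hv; pose proof (sonic_defect_pos v Hv); pose proof (Rinv_lt_0_compat _ beta_neg).
  unfold dx_du; nra.
Qed.

Lemma x_of_u_strict_incr (v w : R) : 0 < v -> v < w -> w <= s -> X v < X w.
Proof.
  intros Hv Hvw Hws; apply (strict_incr_of_is_derive_pos X X'); [easy| |].
  - intros y Hy; apply is_derive_x_of_u; lra.
  - intros y Hy; apply dx_du_pos; lra.
Qed.

Lemma x_of_u_strict_decr (v w : R) : s <= v -> v < w -> X w < X v.
Proof.
  intros Hsv Hvw; pose proof s_c_pos.
  apply (strict_decr_of_is_derive_neg X X'); [easy| |].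
  - intros y Hy; apply is_derive_x_of_u; lra.
  - intros y Hy; apply dx_du_neg; lra.
Qed.

Lemma x_of_u_inj (v w : R) : same_regime s um v -> same_regime s um w -> X v = X w -> v = w.
Proof.
  intros Hv Hw Hvw; destruct (Rtotal_order v w) as [Hlt|[|Hlt]]; [exfalso| easy |exfalso].
  - destruct Hv as [Hv|Hv], Hw as [Hw|Hw]; try lra.
    + pose proof (x_of_u_strict_incr v w); lra.
    + pose proof (x_of_u_strict_decr v w); lra.
  - destruct Hv as [Hv|Hv], Hw as [Hw|Hw]; try lra.
    + pose proof (x_of_u_strict_incr w v); lra.
    + pose proof (x_of_u_strict_decr w v); lra.
Qed.

Lemma exists_x_of_u_inverse (L : R) : s <> um -> 0 < L -> L < X s ->
  exists (u : R -> R) (lo hi : R), lo < 0 /\ L < hi /\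
    forall x, lo < x < hi -> same_regime s um (u x) /\ X (u x) = x /\ is_derive u x (/ X' (u x)).
Proof.
  intros Hs HL HLs; pose proof s_c_pos; pose proof x_of_u_um.
  set (m := (L + X s) / 2).
  destruct (Rtotal_order um s) as [Hlt|[|Hlt]]; [|congruence|].
  - destruct (IVT_strict X um s m) as [z [Hz HXz]];
      [easy|intros; apply x_of_u_continuous; lra|unfold m; lra|].
    destruct (is_derive_inverse_of_incr X X' (um / 2) z) as [g Hg];
      [lra|intros; apply is_derive_x_of_u; lra|intros; apply dx_du_pos; lra|].
    pose proof (x_of_u_strict_incr (um / 2) um).
    exists g, (X (um / 2)), m; split; [lra|split; [unfold m; lra|]].
    intros x Hx; rewrite HXz in Hg; destruct (Hg x Hx) as [Hgx [HXgx Hdg]].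
    split; [left; lra|easy].
  - destruct (IVT_strict (fun v => - X v) s um (- m)) as [z [Hz HXz]];
      [easy|intros; apply continuity_pt_opp, x_of_u_continuous; lra|unfold m; lra|].
    destruct (is_derive_inverse_of_decr X X' z (2 * um)) as [g Hg];
      [lra|intros; apply is_derive_x_of_u; lra|intros; apply dx_du_neg; lra|].
    pose proof (x_of_u_strict_decr um (2 * um)).
    exists g, (X (2 * um)), m; split; [lra|split; [unfold m; lra|]].
    intros x Hx; replace (X z) with m in Hg by lra; destruct (Hg x Hx) as [Hgx [HXgx Hdg]].
    split; [right; lra|easy].
Qed.

End NegativeBeta.

Lemma sound_speed_pos (v : R) : 0 < S v.
Proof. apply Rmult_lt_0_compat; [apply Rmult_lt_0_compat; [easy|]|]; apply Rpower_pos. Qed.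

Lemma sound_speed_um : S um = cm.
Proof.
  unfold sound_speed; rewrite Rmult_assoc, <- Rpower_plus.
  replace ((gamma - 1) / 2 + (1 - gamma) / 2) with 0 by field; rewrite Rpower_O; lra.
Qed.

Lemma sound_speed_invariant (v : R) : 0 < v -> S v * S v * Rpower v (gamma - 1) = K.
Proof.
  intros Hv; unfold sound_speed, invariant_K.
  replace (cm * Rpower um ((gamma - 1) / 2) * Rpower v ((1 - gamma) / 2) *
           (cm * Rpower um ((gamma - 1) / 2) * Rpower v ((1 - gamma) / 2)) *
           Rpower v (gamma - 1))
    with (cm ^ 2 * (Rpower um ((gamma - 1) / 2) * Rpower um ((gamma - 1) / 2)) *
          (Rpower v ((1 - gamma) / 2) * Rpower v ((1 - gamma) / 2) * Rpower v (gamma - 1)))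
    by ring.
  rewrite <- !Rpower_plus.
  replace ((1 - gamma) / 2 + (1 - gamma) / 2 + (gamma - 1)) with 0 by field.
  replace ((gamma - 1) / 2 + (gamma - 1) / 2) with (gamma - 1) by field.
  rewrite Rpower_O by easy; ring.
Qed.

Lemma sound_speed_strict_decr (v w : R) : 0 < v < w -> S w < S v.
Proof.
  intros Hvw; apply Rmult_lt_compat_l; [apply Rmult_lt_0_compat; [easy|apply Rpower_pos]|].
  replace ((1 - gamma) / 2) with (- ((gamma - 1) / 2)) by field.
  rewrite !Rpower_Ropp; apply Rinv_lt_contravar.
  - apply Rmult_lt_0_compat; apply Rpower_pos.
  - apply Rlt_Rpower_l; lra.
Qed.

Lemma lt_sound_speed_iff (v : R) : 0 < v -> (v < S v <-> v < s).
Proof.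
  intros Hv; pose proof (sound_speed_pos v); pose proof (Rpower_pos v (gamma - 1)).
  pose proof s_c_pos.
  rewrite (Rpower_lt_Rpower_iff v s (gamma + 1)), Rpower_s_c, <- (sound_speed_invariant v),
    Rpower_plus_1_sub_1 by lra.
  split; intros Hlt; [apply Rmult_lt_compat_r; [easy|nra]|].
  apply Rmult_lt_reg_r in Hlt; [nra|easy].
Qed.

Lemma sound_speed_lt_iff (v : R) : 0 < v -> (S v < v <-> s < v).
Proof.
  intros Hv; pose proof (sound_speed_pos v); pose proof (Rpower_pos v (gamma - 1)).
  pose proof s_c_pos.
  rewrite (Rpower_lt_Rpower_iff s v (gamma + 1)), Rpower_s_c, <- (sound_speed_invariant v),
    Rpower_plus_1_sub_1 by lra.
  split; intros Hlt; [apply Rmult_lt_compat_r; [easy|nra]|].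
  apply Rmult_lt_reg_r in Hlt; [nra|easy].
Qed.

Lemma is_derive_sound_speed (v : R) : 0 < v -> is_derive S v ((1 - gamma) / 2 * S v / v).
Proof.
  intros Hv; unfold sound_speed; auto_derive; [now apply ex_derive_Rpower|].
  rewrite Derive_Rpower by easy.
  replace ((1 - gamma) / 2 - 1) with ((1 - gamma) / 2 + - (1)) by ring.
  rewrite Rpower_plus, Rpower_Ropp, Rpower_1 by easy.
  field; lra.
Qed.

Lemma ode_second_eq_reduced (v c dc du : R) : 0 < v ->
  c * c * Rpower v (gamma - 1) = K -> dc * v + (gamma - 1) / 2 * c * du = 0 ->
  v * du + 2 / (gamma - 1) * c * dc - beta * Rpower v (1 + alpha)
    = Rpower v (1 + alpha) * (du * D v - beta).
Proof.
  intros Hv HK Heq1; pose proof (Rpower_pos v (gamma - 1)).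
  assert (Hdc : dc = - ((gamma - 1) / 2 * c * du) / v).
  { apply (Rmult_eq_reg_r v); [|lra].
    unfold Rdiv; rewrite Rmult_assoc, Rinv_l by lra; lra. }
  assert (Hpow1 : Rpower v (1 + alpha) * Rpower v (- alpha) = v).
  { rewrite <- Rpower_plus; replace (1 + alpha + - alpha) with 1 by ring; now rewrite Rpower_1. }
  assert (Hpow2 : Rpower v (1 + alpha) * Rpower v (- gamma - 1 - alpha)
                  = / (Rpower v (gamma - 1) * v)).
  { rewrite <- Rpower_plus; replace (1 + alpha + (- gamma - 1 - alpha)) with (- ((gamma - 1) + 1))
      by ring.
    now rewrite Rpower_Ropp, Rpower_plus, Rpower_1. }
  subst dc; unfold sonic_defect; rewrite <- HK.
  replace (Rpower v (1 + alpha) * (du * (Rpower v (- alpha) -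
             c * c * Rpower v (gamma - 1) * Rpower v (- gamma - 1 - alpha)) - beta))
    with (du * (Rpower v (1 + alpha) * Rpower v (- alpha)) - du * c * c * Rpower v (gamma - 1) *
          (Rpower v (1 + alpha) * Rpower v (- gamma - 1 - alpha)) - beta * Rpower v (1 + alpha))
    by ring.
  rewrite Hpow1, Hpow2; field; lra.
Qed.
End Model.

(** * Uniqueness *)

Definition classical_sol (alpha beta gamma cm um L : R) (c u : R -> R) : Prop :=
  c 0 = cm /\ u 0 = um /\
  (forall x, 0 <= x <= L -> 0 < c x /\ 0 < u x /\ continuity_pt c x /\ continuity_pt u x) /\
  (forall x, 0 < x < L -> ex_derive c x /\ ex_derive u x /\ ode_at alpha beta gamma c u x).

Lemma weak_sol_classical_extension (alpha beta gamma cm um L : R) (c u : R -> R) : 0 < L ->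
  weak_sol alpha beta gamma cm um L c u ->
  exists c' u', classical_sol alpha beta gamma cm um L c' u' /\
    forall x, 0 <= x <= L -> c' x = c x /\ u' x = u x.
Proof.
  intros HL [Hc0 [Hu0 [Hpos [Hlc0 [Hlu0 [HlcL [HluL Hode]]]]]]].
  destruct (C0_extension_lt c cm (c L) 0 L HL) as [c' [Hc'cont [Hc'c [Hc'0 Hc'L]]]]; auto.
  { intros x Hx; apply continuity_pt_filterlim, continuity_pt_ex_derive, Hode, Hx. }
  destruct (C0_extension_lt u um (u L) 0 L HL) as [u' [Hu'cont [Hu'u [Hu'0 Hu'L]]]]; auto.
  { intros x Hx; apply continuity_pt_filterlim, continuity_pt_ex_derive, Hode, Hx. }
  assert (Hc'eq : forall x, 0 <= x <= L -> c' x = c x)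
    by (apply eq_on_closed_interval; [congruence|congruence|easy]).
  assert (Hu'eq : forall x, 0 <= x <= L -> u' x = u x)
    by (apply eq_on_closed_interval; [congruence|congruence|easy]).
  exists c', u'; split; [|intros x Hx; split; auto].
  split; [easy|split; [easy|split]].
  - intros x Hx; rewrite Hc'eq, Hu'eq by easy.
    split; [apply Hpos, Hx|split; [apply Hpos, Hx|]].
    split; apply continuity_pt_filterlim; [apply Hc'cont|apply Hu'cont].
  - intros x Hx.
    assert (Hloc : forall f f' : R -> R, (forall y, 0 < y < L -> f' y = f y) ->
                   locally x (fun y => f y = f' y)).
    { intros f f' Hff'; apply (locally_interval _ x 0 L); simpl; try lra.
      intros y Hy0 HyL; symmetry; apply Hff'; lra. }
    destruct (Hode x Hx) as [Hdc [Hdu [Heq1 Heq2]]].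
    split; [apply (ex_derive_ext_loc c); auto|split; [apply (ex_derive_ext_loc u); auto|]].
    unfold ode_at; rewrite <- (Derive_ext_loc c c'), <- (Derive_ext_loc u u') by auto.
    rewrite Hc'c, Hu'u by easy; split; easy.
Qed.

Section ClassicalSolution.

Variables alpha beta gamma cm um L : R.
Variables c u : R -> R.
Hypothesis gamma_gt1 : 1 < gamma.
Hypothesis um_pos : 0 < um.
Hypothesis beta_neg : beta < 0.
Hypothesis sol : classical_sol alpha beta gamma cm um L c u.

Local Notation s := (s_c gamma cm um).
Local Notation K := (invariant_K gamma cm um).
Local Notation X := (x_of_u alpha beta gamma cm um).

Lemma classical_sol_invariant (x : R) : 0 <= x <= L ->
  c x * c x * Rpower (u x) (gamma - 1) = K.
Proof.
  destruct sol as [Hc0 [Hu0 [Hreg Hode]]]; intros Hx.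
  refine (eq_trans (constant_of_is_derive_0 (fun t => c t * c t * Rpower (u t) (gamma - 1))
                      0 L _ _ x Hx) _).
  3: simpl; rewrite Hc0, Hu0; unfold invariant_K; ring.
  - intros y Hy; destruct (Hode y Hy) as [Hdc [Hdu [Heq1 _]]].
    destruct (Hreg y) as [Hcy [Huy _]]; [lra|].
    auto_derive; [repeat split; auto using ex_derive_Rpower|].
    rewrite Derive_Rpower by easy.
    replace (Rpower (u y) (gamma - 1)) with (Rpower (u y) (gamma - 1 - 1) * u y)
      by (rewrite <- (Rpower_1 (u y)) at 2 by easy; rewrite <- Rpower_plus; f_equal; ring).
    change (fun t => c t) with c; change (fun t => u t) with u.
    transitivity (2 * c y * Rpower (u y) (gamma - 1 - 1) *
                  (Derive c y * u y + (gamma - 1) / 2 * c y * Derive u y));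
      [field|rewrite Heq1; ring].
  - intros y Hy; destruct (Hreg y Hy) as [Hcy [Huy [Hcc Hcu]]].
    apply continuity_pt_mult; [now apply continuity_pt_mult|].
    now apply continuity_pt_Rpower_comp.
Qed.

Lemma classical_sol_x_of_u (x : R) : 0 <= x <= L -> X (u x) = x.
Proof.
  intros Hx; pose proof sol as [_ [Hu0 [Hreg Hode]]].
  enough (X (u x) - x = X (u 0) - 0) by (rewrite Hu0, x_of_u_um in *; lra).
  refine (constant_of_is_derive_0 (fun t => X (u t) - t) 0 L _ _ x Hx).
  - intros y Hy; destruct (Hode y Hy) as [Hdc [Hdu [Heq1 Heq2]]].
    destruct (Hreg y) as [Hcy [Huy _]]; [lra|].
    assert (Hdu_D : Derive u y * sonic_defect alpha gamma cm um (u y) - beta = 0).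
    { pose proof (ode_second_eq_reduced alpha beta gamma cm um gamma_gt1 (u y) (c y)
                    (Derive c y) (Derive u y) Huy (classical_sol_invariant y ltac:(lra)) Heq1)
        as Hred.
      rewrite Heq2, Rminus_diag in Hred.
      destruct (Rmult_integral _ _ (eq_sym Hred)) as [Hpow|]; [|easy].
      pose proof (Rpower_pos (u y) (1 + alpha)); lra. }
    auto_derive; [split; [eexists; now apply is_derive_x_of_u|easy]|].
    change (fun t => u t) with u; change (fun t => X t) with X.
    rewrite (is_derive_unique _ _ _
               (is_derive_x_of_u alpha beta gamma cm um gamma_gt1 um_pos _ Huy)).
    unfold dx_du.
    transitivity (/ beta * (Derive u y * sonic_defect alpha gamma cm um (u y) - beta));
      [field; lra|rewrite Hdu_D; ring].
  - intros y Hy; destruct (Hreg y Hy) as [_ [Huy [_ Hcu]]].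
    apply continuity_pt_minus; [|apply derivable_continuous_pt, derivable_pt_id].
    apply (continuity_pt_comp u X); [easy|now apply x_of_u_continuous].
Qed.

Lemma classical_sol_same_regime (x : R) : s <> um -> L < X s -> 0 <= x <= L ->
  same_regime s um (u x).
Proof.
  intros Hs HLs Hx; pose proof sol as [_ [Hu0 [Hreg _]]].
  assert (Hconst : forall k y, continuity_pt (fun _ => k) y)
    by (intros k y; apply continuity_pt_const; now intros ? ?).
  assert (Hside : 0 < (u x - s) * (um - s)).
  { apply (pos_of_continuous_nonzero (fun t => (u t - s) * (um - s)) 0 L);
      [| |now rewrite Hu0; nra|easy].
    - intros y Hy; apply continuity_pt_mult; [|apply Hconst].
      apply continuity_pt_minus; [apply Hreg, Hy|apply Hconst].
    - intros y Hy Hzero; apply Rmult_integral in Hzero as [Hus|]; [|lra].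
      pose proof (classical_sol_x_of_u y Hy) as HX; replace (u y) with s in HX by lra; lra. }
  destruct (Hreg x Hx) as [_ [Hux _]].
  destruct (Rtotal_order um s) as [|[|]]; [left|congruence|right]; split; nra.
Qed.

End ClassicalSolution.

(** * Existence, smoothness and ordering *)

Section Construction.

Variables alpha beta gamma cm um L lo hi : R.
Variable u : R -> R.
Hypothesis gamma_gt1 : 1 < gamma.
Hypothesis cm_pos : 0 < cm.
Hypothesis um_pos : 0 < um.
Hypothesis beta_neg : beta < 0.
Hypothesis L_pos : 0 < L.
Hypothesis lo_neg : lo < 0.
Hypothesis L_lt_hi : L < hi.

Local Notation s := (s_c gamma cm um).
Local Notation D := (sonic_defect alpha gamma cm um).
Local Notation X := (x_of_u alpha beta gamma cm um).
Local Notation X' := (dx_du alpha beta gamma cm um).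
Local Notation S := (sound_speed gamma cm um).

Hypothesis u_inverse : forall x, lo < x < hi ->
  same_regime s um (u x) /\ X (u x) = x /\ is_derive u x (/ X' (u x)).

Lemma inverse_at_0 : u 0 = um.
Proof.
  destruct (u_inverse 0) as [Hreg [HX _]]; [lra|].
  apply (x_of_u_inj alpha beta gamma cm um gamma_gt1 cm_pos um_pos beta_neg); [exact Hreg| |].
  - apply same_regime_um; [easy|intros Hs; destruct Hreg; lra].
  - now rewrite HX, x_of_u_um.
Qed.

Lemma inverse_ex_derive_n (n : nat) (x : R) : lo < x < hi ->
  ex_derive_n (fun t => S (u t)) n x /\ ex_derive_n u n x.
Proof.
  intros Hx.
  assert (Hreg_pos : forall v, same_regime s um v -> 0 < v) by apply same_regime_pos.
  assert (Hexpr : rpower_expr (same_regime s um) (fun v => / X' v)).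
  { unfold dx_du, sonic_defect, Rminus; repeat constructor.
    intros v Hv; apply Rmult_integral_contrapositive; split.
    - apply Rinv_neq_0_compat; lra.
    - now apply sonic_defect_neq0. }
  assert (Hauto : forall y, lo < y < hi ->
                    same_regime s um (u y) /\ is_derive u y ((fun v => / X' v) (u y)))
    by (intros y Hy; now split; apply u_inverse).
  split.
  - apply (ex_derive_n_comp_rpower_expr _ Hreg_pos _ u lo hi Hexpr Hauto n S); [|easy].
    now repeat constructor.
  - apply (ex_derive_n_comp_rpower_expr _ Hreg_pos _ u lo hi Hexpr Hauto n (fun v => v));
      [constructor|easy].
Qed.

Lemma inverse_ode_at (x : R) : lo < x < hi -> ode_at alpha beta gamma (fun t => S (u t)) u x.
Proof.
  intros Hx; destruct (u_inverse x Hx) as [Hreg [_ Hdu]].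
  assert (Hux : 0 < u x) by now apply (same_regime_pos gamma cm um).
  assert (HD : D (u x) <> 0) by now apply sonic_defect_neq0.
  assert (Hdc : is_derive (fun t : R => S (u t)) x
                  (/ X' (u x) * ((1 - gamma) / 2 * S (u x) / u x)))
    by (apply (is_derive_comp S u); [apply is_derive_sound_speed|]; easy).
  unfold ode_at; rewrite (is_derive_unique _ _ _ Hdc), (is_derive_unique _ _ _ Hdu).
  assert (Heq1 : / X' (u x) * ((1 - gamma) / 2 * S (u x) / u x) * u x +
                 (gamma - 1) / 2 * S (u x) * / X' (u x) = 0)
    by (unfold dx_du; field; repeat split; lra).
  split; [exact Heq1|apply Rminus_diag_uniq].
  rewrite (ode_second_eq_reduced alpha beta gamma cm um gamma_gt1 _ _ _ _ Hux
             (sound_speed_invariant gamma cm um (u x) Hux) Heq1).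
  unfold dx_du; field; split; [lra|easy].
Qed.

Lemma inverse_smooth_sol : smooth_sol alpha beta gamma cm um L (fun x => S (u x)) u.
Proof.
  split; [now rewrite inverse_at_0, sound_speed_um|split; [apply inverse_at_0|]].
  intros x Hx; destruct (u_inverse x) as [Hreg _]; [lra|].
  split; [now apply sound_speed_pos|split; [now apply (same_regime_pos gamma cm um)|split]].
  - intros n; apply inverse_ex_derive_n; lra.
  - apply inverse_ode_at; lra.
Qed.

Lemma inverse_between (x : R) : 0 < x < hi ->
  (um < s -> um < u x < s) /\ (s < um -> s < u x < um).
Proof.
  intros Hx; destruct (u_inverse x) as [Hreg [HX _]]; [lra|].
  pose proof (x_of_u_um alpha beta gamma cm um um_pos) as HX0.
  split; intros Hs.
  - destruct Hreg as [Hreg|]; [|lra]; split; [|lra].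
    destruct (Rtotal_order um (u x)) as [|[Heq|Hlt]]; [easy|rewrite <- Heq in HX; lra|].
    pose proof (x_of_u_strict_incr alpha beta gamma cm um gamma_gt1 cm_pos um_pos beta_neg
                  (u x) um); lra.
  - destruct Hreg as [|Hreg]; [lra|]; split; [lra|].
    destruct (Rtotal_order um (u x)) as [Hlt|[Heq|]]; [|rewrite <- Heq in HX; lra|easy].
    pose proof (x_of_u_strict_decr alpha beta gamma cm um gamma_gt1 cm_pos um_pos beta_neg
                  um (u x)); lra.
Qed.

Lemma inverse_order_subsonic (x : R) : um < cm -> 0 < x <= L ->
  um < u x /\ u x < S (u x) /\ S (u x) < cm.
Proof.
  intros Hcm Hx.
  assert (Hs : um < s)
    by (rewrite <- (lt_sound_speed_iff gamma cm um), sound_speed_um; easy).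
  destruct (proj1 (inverse_between x ltac:(lra)) Hs) as [Hum Hus].
  split; [easy|split].
  - apply (lt_sound_speed_iff gamma cm um); easy || lra.
  - pose proof (sound_speed_strict_decr gamma cm um gamma_gt1 cm_pos um (u x)) as Hdecr.
    rewrite sound_speed_um in Hdecr by easy; apply Hdecr; lra.
Qed.

Lemma inverse_order_supersonic (x : R) : cm < um -> 0 < x <= L ->
  cm < S (u x) /\ S (u x) < u x /\ u x < um.
Proof.
  intros Hcm Hx; pose proof (s_c_pos gamma cm um).
  assert (Hs : s < um)
    by (rewrite <- (sound_speed_lt_iff gamma cm um), sound_speed_um; easy).
  destruct (proj2 (inverse_between x ltac:(lra)) Hs) as [Hsu Hum].
  split; [|split; [|easy]].
  - pose proof (sound_speed_strict_decr gamma cm um gamma_gt1 cm_pos (u x) um) as Hdecr.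
    rewrite sound_speed_um in Hdecr by easy; apply Hdecr; lra.
  - apply (sound_speed_lt_iff gamma cm um); easy || lra.
Qed.

Lemma inverse_unique (c2 u2 : R -> R) : L < X s ->
  weak_sol alpha beta gamma cm um L c2 u2 ->
  forall x, 0 <= x <= L -> c2 x = S (u x) /\ u2 x = u x.
Proof.
  intros HLs Hweak x Hx.
  destruct (weak_sol_classical_extension _ _ _ _ _ _ _ _ L_pos Hweak) as [c3 [u3 [Hsol Heq]]].
  destruct (Heq x Hx) as [<- <-].
  destruct (u_inverse x) as [Hreg [HX _]]; [lra|].
  assert (Hs : s <> um) by (intros Hs; destruct Hreg; lra).
  assert (Hu3 : u3 x = u x).
  { apply (x_of_u_inj alpha beta gamma cm um gamma_gt1 cm_pos um_pos beta_neg).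
    - now apply (classical_sol_same_regime alpha beta gamma cm um L c3).
    - exact Hreg.
    - rewrite HX; now apply (classical_sol_x_of_u alpha beta gamma cm um L c3). }
  split; [|exact Hu3].
  pose proof (classical_sol_invariant alpha beta gamma cm um L c3 u3 Hsol x Hx) as Hc3.
  destruct Hsol as [_ [_ [Hpos _]]]; destruct (Hpos x Hx) as [Hc3x [Hu3x _]].
  rewrite Hu3, <- (sound_speed_invariant gamma cm um (u x)) in Hc3 by lra.
  apply Rmult_eq_reg_r in Hc3; [|apply Rgt_not_eq, Rpower_pos].
  pose proof (sound_speed_pos gamma cm um cm_pos (u x)); nra.
Qed.

End Construction.

Theorem lemma2p1 (gamma alpha beta cm um L : R) :
  1 < gamma -> 0 < um -> 0 < cm -> 0 < L ->
  L < L_m alpha beta gamma cm um ->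
  exists c u : R -> R,
    smooth_sol alpha beta gamma cm um L c u /\
    (forall c2 u2 : R -> R, weak_sol alpha beta gamma cm um L c2 u2 ->
       forall x, 0 <= x <= L -> c2 x = c x /\ u2 x = u x) /\
    (forall x, 0 < x <= L ->
       (0 < beta -> um < cm -> 0 < u x /\ u x < um /\ um < cm /\ cm < c x) /\
       (0 < beta -> cm < um -> 0 < c x /\ c x < cm /\ cm < um /\ um < u x) /\
       (beta < 0 -> um < cm -> 0 < um /\ um < u x /\ u x < c x /\ c x < cm) /\
       (beta < 0 -> cm < um -> 0 < cm /\ cm < c x /\ c x < u x /\ u x < um)).
Proof.
  intros Hg Hum Hcm HL HLm.
  destruct (L_m_pos_inv alpha beta gamma cm um Hg Hcm Hum) as [Hb Hs]; [lra|].
  rewrite L_m_x_of_u in HLm.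
  destruct (exists_x_of_u_inverse alpha beta gamma cm um Hg Hcm Hum Hb L Hs HL HLm)
    as [u [lo [hi [Hlo [Hhi Hu]]]]].
  exists (fun x => sound_speed gamma cm um (u x)), u; split; [|split].
  - now apply (inverse_smooth_sol alpha beta gamma cm um L lo hi).
  - intros c2 u2; now apply (inverse_unique alpha beta gamma cm um L lo hi).
  - intros x Hx; split; [lra|split; [lra|split]]; intros _ Hc.
    + pose proof (inverse_order_subsonic alpha beta gamma cm um L lo hi u
                    Hg Hcm Hum Hb Hlo Hhi Hu x Hc Hx); lra.
    + pose proof (inverse_order_supersonic alpha beta gamma cm um L lo hi u
                    Hg Hcm Hum Hb Hlo Hhi Hu x Hc Hx); lra.
Qed.
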